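(* Let $q>2$ be a power of $2$ and let $U$ be an intersecting family of $q^2-\varepsilon$ polynomials over $\mathbb{F}_q$ of degree at most $2$, where $\varepsilon<\frac{q\sqrt{q}}{4}-\frac{q}{8}-\frac{\sqrt{q}}{8}$. Then the graphs of the polynomials in $U$ share a common point.
   Context: The graph of $f\colon\mathbb{F}_q\to\mathbb{F}_q$ is $\{(x,f(x)):x\in\mathbb{F}_q\}$. A set of polynomials over $\mathbb{F}_q$ is intersecting if the graphs of any two of its members share at least one point. *)

From HB Require Import structures.
From mathcomp Require Import all_boot all_order all_algebra all_field.
Set Implicit Arguments. Unset Strict Implicit. Unset Printing Implicit Defensive.
Import Order.TTheory GRing.Theory Num.Theory.
Local Open Scope ring_scope.

Definition graphs_meet (F : finFieldType) (f g : {poly F}) : Prop :=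
  exists x : F, f.[x] = g.[x].

Definition intersecting (F : finFieldType) (U : seq {poly F}) : Prop :=
  forall f g, f \in U -> g \in U -> graphs_meet f g.

Definition common_point (F : finFieldType) (U : seq {poly F}) : Prop :=
  exists x y : F, forall f, f \in U -> f.[x] = y.

From HB Require Import structures.
From mathcomp Require Import all_boot all_order all_algebra all_field.
From mathcomp Require Import ring zify.
Set Implicit Arguments. Unset Strict Implicit. Unset Printing Implicit Defensive.
Import Order.TTheory GRing.Theory Num.Theory.
Local Open Scope ring_scope.

(* Write the members of U as c + b x + a x^2.  Members with the same (a, b) meet only
   if they coincide, so U is the graph of a function c(a, b) on a set S of |U| > 3q^2/4
   pairs, and in characteristic 2 members with b <> b' meet iff
   Tr((a - a')(c - c')/(b - b')^2) = 0.  By density some row b0 of S has more than 3q/4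
   points and more than q/2 rows have more than q/2 points.  Comparing row b0 with one
   big row makes c(., b0) affine, c(a, b0) = L a + g0 with L additive; comparing it with
   each big row b makes (x, y) |-> Tr(lam_b x L y) symmetric, lam_b = 1/(b - b0)^2, as
   the polar form of a quadratic form that must vanish.  Hence the more than q/2 ratios
   lam_b/lam_b1 commute with L, which is therefore F-linear: L y = v^2 y.  Nondegeneracy
   of the trace form then gives c(a, b) = v^2 a + v b + y0 on S: every graph contains
   (v, y0). *)

Section Pigeonhole.
Variable T : finType.

Lemma leq_card_setI (A B : {set T}) : (#|A| + #|B| <= #|A :&: B| + #|T|)%N.
Proof. by rewrite -cardsUI addnC leq_add2l max_card. Qed.

Lemma setI_witness (A B : {set T}) :
  (#|T| < #|A| + #|B|)%N -> exists2 x, x \in A & x \in B.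
Proof.
move=> AB; have: (0 < #|A :&: B|)%N by have := leq_card_setI A B; lia.
by case/card_gt0P => x /setIP[]; exists x.
Qed.

End Pigeonhole.

Section LargeSubsets.
Variable G : finZmodType.

Lemma card_addr_imset (A : {set G}) (u : G) : #|[set a + u | a in A]| = #|A|.
Proof. by apply: card_imset; apply: addIr. Qed.

Lemma card_subr_imset (A : {set G}) (u : G) : #|[set u - a | a in A]| = #|A|.
Proof. by apply: card_imset => x y /addrI /oppr_inj. Qed.

Lemma big_set_subr_onto (A : {set G}) : (#|G| < 2 * #|A|)%N ->
  forall u, exists2 a1, a1 \in A & exists2 a2, a2 \in A & u = a1 - a2.
Proof.
move=> bigA u; have [x Ax /imsetP[a Aa xE]] : exists2 x, x \in A & x \in [set a + u | a in A].
  by apply: setI_witness; rewrite card_addr_imset addnn -mul2n.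
by exists x => //; exists a; rewrite // xE addrC addKr.
Qed.

Lemma big_addr_closed_full (A : {set G}) :
  (forall x y, x \in A -> y \in A -> x + y \in A) ->
  (#|G| < 2 * #|A|)%N -> forall x, x \in A.
Proof.
move=> addA bigA x.
have [y Ay /imsetP[a Aa ya]] : exists2 y, y \in A & y \in [set x - a | a in A].
  by apply: setI_witness; rewrite card_subr_imset addnn -mul2n.
by rewrite -(subrK a x) -ya addA.
Qed.

Lemma big_set_translates_meet (A : {set G}) u v : (2 * #|G| < 3 * #|A|)%N ->
  exists2 x, x \in A & (x + u \in A) && (x - v \in A).
Proof.
move=> bigA; have := leq_card_setI A [set a - u | a in A].
rewrite card_addr_imset => cardAu.
have [x /setIP[Ax /imsetP[a Aa xE]] /imsetP[a' Aa' xE']] :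
    exists2 x, x \in A :&: [set a - u | a in A] & x \in [set a + v | a in A].
  (* [set] identifies the finType and finZmodType elaborations of [#|G|] for [lia]. *)
  by apply: setI_witness; rewrite card_addr_imset; move: bigA cardAu; set q := #|G|; lia.
by exists x => //; rewrite {1}xE xE' subrK addrK Aa Aa'.
Qed.

Definition bool_additive (phi : G -> bool) := forall x y, phi (x + y) = phi x (+) phi y.

Variable phi : G -> bool.
Hypothesis phiD : bool_additive phi.

Lemma card_bool_additive_ker : (#|G| <= 2 * #|[set y | ~~ phi y]|)%N.
Proof.
case: (pickP phi) => [y0 phi_y0|phi0]; last first.
  have -> : [set y | ~~ phi y] = setT by apply/setP => y; rewrite !inE phi0.
  by rewrite cardsT leq_pmull.
have : (#|[set y | phi y]| <= #|[set y | ~~ phi y]|)%N.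
  rewrite -(card_addr_imset _ y0) subset_leq_card //.
  by apply/subsetP => z /imsetP[y]; rewrite !inE => phi_y ->; rewrite phiD phi_y phi_y0.
have : (#|[set y | phi y]| + #|[set y | ~~ phi y]| = #|G|)%N.
  have -> : [set y | ~~ phi y] = ~: [set y | phi y] by apply/setP => y; rewrite !inE.
  exact: cardsC.
lia.
Qed.

Lemma bool_additive_vanish (A : {set G}) : (#|G| < 2 * #|A|)%N ->
  {in A, forall x, ~~ phi x} -> forall x, ~~ phi x.
Proof.
move=> bigA phiA x; suff : x \in [set y | ~~ phi y] by rewrite inE.
apply: big_addr_closed_full => [y z|].
  by rewrite !inE phiD => /negbTE-> /negbTE->.
apply: (leq_trans bigA); rewrite leq_mul2l subset_leq_card //.
by apply/subsetP => y /phiA; rewrite inE.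
Qed.

Lemma bool_additive_ker_meet (A : {set G}) x : (3 * #|G| < 4 * #|A|)%N ->
  exists2 y, ~~ phi y & (y \in A) && (x + y \in A).
Proof.
move=> bigA; have ker := card_bool_additive_ker.
have := leq_card_setI A [set a - x | a in A]; rewrite card_addr_imset => cardAx.
have [y ker_y /setIP[Ay /imsetP[a Aa yE]]] :
    exists2 y, y \in [set y | ~~ phi y] & y \in A :&: [set a - x | a in A].
  by apply: setI_witness; move: bigA ker cardAx; set q := #|G|; lia.
exists y; first by move: ker_y; rewrite inE.
by rewrite Ay yE addrC subrK Aa.
Qed.

End LargeSubsets.

Section ArtinSchreier.
Variable F : finFieldType.
Hypothesis F2 : 2 \in [pchar F].

Lemma sqrrD_pchar2 (x y : F) : (x + y) ^+ 2 = x ^+ 2 + y ^+ 2.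
Proof. exact: (rmorphD (pFrobenius_aut F2)). Qed.

Lemma sqrr_inj_pchar2 : injective (fun x : F => x ^+ 2).
Proof. exact: fmorph_inj (pFrobenius_aut F2). Qed.

Lemma sqrr_onto_pchar2 (k : F) : exists v, v ^+ 2 = k.
Proof. by have /injF_bij[g _ gK] := sqrr_inj_pchar2; exists (g k); rewrite gK. Qed.

Definition artin_schreier (y : F) := y ^+ 2 + y.

Lemma artin_schreierD x y :
  artin_schreier (x + y) = artin_schreier x + artin_schreier y.
Proof. by rewrite /artin_schreier sqrrD_pchar2 addrACA. Qed.

Lemma artin_schreier_fiber y z :
  artin_schreier y = artin_schreier z -> z = y \/ z = y + 1.
Proof.
move=> eq_yz; have : (y + z) * (y + z + 1) = 0.
  by rewrite -(addrr_pchar2 F2 (artin_schreier y)) {2}eq_yz -artin_schreierD /artin_schreier; ring.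
move/eqP; rewrite mulf_eq0 => /orP[] /eqP yz0; [left | right].
  by rewrite -(addKr_pchar2 F2 y z) yz0 addr0.
by rewrite -(addKr_pchar2 F2 (y + 1) z) [y + 1 + z]addrAC yz0 addr0.
Qed.

Definition as_image := [set artin_schreier y | y in F].

Lemma as_imageD x y : x \in as_image -> y \in as_image -> x + y \in as_image.
Proof.
by move=> /imsetP[a _ ->] /imsetP[b _ ->]; rewrite -artin_schreierD imset_f.
Qed.

(* [artin_schreier] is two-to-one; [y] is told apart from [y + 1] by comparing ranks. *)
Lemma card_as_image : (#|F| <= 2 * #|as_image|)%N.
Proof.
pose bit (y : F) := (enum_rank y < enum_rank (y + 1)%R)%N.
have inj_split : injective (fun y => (artin_schreier y, bit y)).
  move=> y z [/artin_schreier_fiber[] // -> bit_eq].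
  apply: enum_rank_inj; apply: val_inj; apply/eqP.
  by move: bit_eq; rewrite /bit -addrA (addrr_pchar2 F2) addr0; case: ltngtP.
have : [set (artin_schreier y, bit y) | y in F] \subset setX as_image setT.
  by apply/subsetP => _ /imsetP[y _ ->]; rewrite !inE /= andbT imset_f.
by move/subset_leq_card; rewrite card_imset // cardsX cardsT card_bool mulnC.
Qed.

Lemma as_image_index2 x y :
  x \notin as_image -> y \notin as_image -> x + y \in as_image.
Proof.
move=> xN yN; pose xA := [set a + x | a in as_image].
have xA_sub : xA \subset ~: as_image.
  apply/subsetP => _ /imsetP[a Aa ->]; rewrite inE; apply: contra xN => Aax.
  by rewrite -(addKr_pchar2 F2 a x) as_imageD.
have : y \in xA.
  suff -> : xA = ~: as_image by rewrite inE.
  apply/eqP; rewrite eqEcard xA_sub /= card_addr_imset.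
  by rewrite -(leq_add2l #|as_image|) cardsC addnn -mul2n; exact: card_as_image.
by case/imsetP => a Aa ->; rewrite addrC addrK_pchar2.
Qed.

(* [trace1 x] means that the absolute trace of [x] is 1 (additive Hilbert 90);
   only additivity, vanishing on [artin_schreier] and nondegeneracy are used. *)
Definition trace1 (x : F) := x \notin as_image.

Lemma trace1D : bool_additive trace1.
Proof.
have addK z w : z \in as_image -> (z + w \in as_image) = (w \in as_image).
  move=> Az; apply/idP/idP => [Azw|]; last exact: as_imageD.
  by rewrite -(addKr_pchar2 F2 z w) as_imageD.
move=> x y; rewrite /trace1.
case Ax: (x \in as_image); first by rewrite addK //=.
case Ay: (y \in as_image); first by rewrite addrC addK // Ax.
by rewrite as_image_index2 ?Ax ?Ay.
Qed.

Lemma trace1N x : trace1 (- x) = trace1 x.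
Proof. by rewrite oppr_pchar2. Qed.

Lemma trace1B x y : trace1 (x - y) = trace1 x (+) trace1 y.
Proof. by rewrite trace1D trace1N. Qed.

Lemma trace1_artin_schreier y : trace1 (artin_schreier y) = false.
Proof. by rewrite /trace1 imset_f. Qed.

Lemma trace1_exists : exists z, trace1 z.
Proof.
case: (pickP trace1) => [z tr_z | Aall]; first by exists z.
have A_full : as_image = setT.
  by apply/setP => z; move/negbFE: (Aall z); rewrite inE.
have /imset_injP as_inj : #|as_image| == #|F| by rewrite A_full cardsT.
have : (0 : F) = 1.
  apply: as_inj => //.
  by rewrite /artin_schreier expr1n expr0n addr0 addrr_pchar2.
by move/eqP; rewrite eq_sym oner_eq0.
Qed.

Lemma trace1_nondeg x : (forall w, ~~ trace1 (w * x)) -> x = 0.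
Proof.
move=> tr0; apply: contraTeq isT => x_neq0.
have [z trz] := trace1_exists.
by move: (tr0 (z / x)); rewrite mulfVK // trz.
Qed.

Lemma trace1_scale_additive x : bool_additive (fun w => trace1 (w * x)).
Proof. by move=> v w; rewrite mulrDl trace1D. Qed.

Lemma trace1_meet (a b c a' b' c' x : F) : b != b' ->
  c + b * x + a * x ^+ 2 = c' + b' * x + a' * x ^+ 2 ->
  ~~ trace1 ((a - a') * (c - c') / (b - b') ^+ 2).
Proof.
move=> bb' meet; have bb'0 : b - b' != 0 by rewrite subr_eq0.
have -> : c = c' + b' * x + a' * x ^+ 2 - b * x - a * x ^+ 2 by rewrite -meet; ring.
have -> : (a - a') * (c' + b' * x + a' * x ^+ 2 - b * x - a * x ^+ 2 - c') / (b - b') ^+ 2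
    = - artin_schreier ((a - a') * x / (b - b')) by rewrite /artin_schreier; field.
by rewrite trace1N trace1_artin_schreier.
Qed.

Lemma trace1_four_point (l a1 a2 a1' a2' g1 g2 h1 h2 : F) :
  ~~ trace1 (l * ((a1 - a1') * (g1 - h1))) -> ~~ trace1 (l * ((a1 - a2') * (g1 - h2))) ->
  ~~ trace1 (l * ((a2 - a1') * (g2 - h1))) -> ~~ trace1 (l * ((a2 - a2') * (g2 - h2))) ->
  trace1 (l * (a1 - a2) * (h1 - h2)) = trace1 (l * (a1' - a2') * (g1 - g2)).
Proof.
move=> /negbTE t11 /negbTE t12 /negbTE t21 /negbTE t22.
have -> : l * (a1 - a2) * (h1 - h2) =
  - (l * ((a1 - a1') * (g1 - h1)) - l * ((a1 - a2') * (g1 - h2))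
     - l * ((a2 - a1') * (g2 - h1)) + l * ((a2 - a2') * (g2 - h2)))
  - l * (a1' - a2') * (g1 - g2) by ring.
by rewrite trace1B trace1N trace1D !trace1B t11 t12 t21 t22.
Qed.

End ArtinSchreier.

Section Rows.
Variables (T U : finType) (S : {set T * U}).

Definition row (b : U) := [set a | (a, b) \in S].

Definition big_rows := [set b | (#|T| < 2 * #|row b|)%N].

Lemma sum_card_row : (\sum_b #|row b|)%N = #|S|.
Proof.
rewrite -sum1_card (partition_big snd predT) //=; apply: eq_bigr => b _.
rewrite -sum1_card (reindex (fun a => (a, b))) /=.
  by apply: eq_bigl => a; rewrite inE andbC eqxx.
by exists fst => [a _|[a b'] /andP[_ /eqP /= ->]].
Qed.

Hypothesis bigS : (3 * (#|T| * #|U|) < 4 * #|S|)%N.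

Lemma exists_big_row : exists b, (3 * #|T| < 4 * #|row b|)%N.
Proof.
apply/existsP; apply: contraLR bigS; rewrite negb_exists -leqNgt => /forallP small.
rewrite -sum_card_row big_distrr mulnA mulnC -sum_nat_const leq_sum // => b _.
by rewrite leqNgt small.
Qed.

Lemma card_big_rows : (#|U| < 2 * #|big_rows|)%N.
Proof.
have rowT b : (2 * #|row b| <= #|T| + #|T| * (b \in big_rows))%N.
  rewrite inE; case: ltnP => [_|small]; last by rewrite muln0 addn0.
  by rewrite muln1 addnn -mul2n leq_mul2l max_card orbT.
have sum_rowT : (\sum_b (#|T| + #|T| * (b \in big_rows)) = #|T| * #|U| + #|T| * #|big_rows|)%N.
  rewrite big_split sum_nat_const mulnC -big_distrr /=; congr (_ + _ * _)%N.
  by rewrite -sum1_card [RHS]big_mkcond; apply: eq_bigr => b _; case: (b \in big_rows).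
have le_S : (2 * #|S| <= #|T| * #|U| + #|T| * #|big_rows|)%N.
  by rewrite -sum_card_row big_distrr -sum_rowT leq_sum.
rewrite ltnNge; apply/negP => small.
have := leq_mul (leqnn #|T|) small; nia.
Qed.

End Rows.

Section AffineRows.
Variable F : finFieldType.
Hypothesis F2 : 2 \in [pchar F].
Variables (S : {set F * F}) (c : F -> F -> F).
Hypothesis meetS : forall a b a' b', (a, b) \in S -> (a', b') \in S -> b != b' ->
  ~~ trace1 ((a - a') * (c a b - c a' b') / (b - b') ^+ 2).
Variables b0 b1 : F.
Hypothesis big_b0 : (3 * #|F| < 4 * #|row S b0|)%N.
Hypothesis many_big_rows : (#|F| < 2 * #|big_rows S|)%N.
Hypotheses (big_b1 : b1 \in big_rows S) (b1_neq0 : b1 != b0).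

Local Notation R := (row S b0).
Local Notation g a := (c a b0).

Definition lam b := ((b0 - b) ^+ 2)^-1.

Lemma lam_neq0 b : b != b0 -> lam b != 0.
Proof. by move=> bb0; rewrite invr_eq0 expf_eq0 subr_eq0 eq_sym. Qed.

Lemma lam_inj : injective lam.
Proof. by move=> b b' /invr_inj /(sqrr_inj_pchar2 F2) /subrI. Qed.

Lemma row_b0_big : (#|F| < 2 * #|R|)%N.
Proof. by move: big_b0; lia. Qed.

Lemma trace1_cross b a a' : b != b0 -> a \in R -> a' \in row S b ->
  ~~ trace1 (lam b * ((a - a') * (g a - c a' b))).
Proof.
by move=> bb0; rewrite !inE => Ra Sa'; rewrite mulrC; apply: meetS; rewrite // eq_sym.
Qed.

Lemma trace1_swap b a1 a2 a1' a2' : b != b0 ->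
  a1 \in R -> a2 \in R -> a1' \in row S b -> a2' \in row S b ->
  trace1 (lam b * (a1 - a2) * (c a1' b - c a2' b))
  = trace1 (lam b * (a1' - a2') * (g a1 - g a2)).
Proof. by move=> bb0 *; apply: (trace1_four_point F2); apply: trace1_cross. Qed.

Lemma g_subr_congr a1 a2 a3 a4 : a1 \in R -> a2 \in R -> a3 \in R -> a4 \in R ->
  a1 - a2 = a3 - a4 -> g a1 - g a2 = g a3 - g a4.
Proof.
move=> R1 R2 R3 R4 eq_diff; apply/eqP; rewrite -subr_eq0; apply/eqP.
apply: (trace1_nondeg F2) => w.
have b1_big : (#|F| < 2 * #|row S b1|)%N by move: big_b1; rewrite inE.
have [a1' S1 [a2' S2 wE]] := big_set_subr_onto b1_big (w / lam b1).
have -> : w = lam b1 * (a1' - a2') by rewrite -wE mulrC divfK ?lam_neq0.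
by rewrite mulrBr (trace1B F2) -!(trace1_swap b1_neq0) // eq_diff addbb.
Qed.

(* Differences of row [b0] cover [F] ([row_b0_big]); [g_subr_congr] makes this well defined. *)
Definition L (u : F) : F :=
  if [pick p : F * F | [&& p.1 \in R, p.2 \in R & p.1 - p.2 == u]] is Some p
  then g p.1 - g p.2 else 0.

Lemma L_subr a1 a2 : a1 \in R -> a2 \in R -> L (a1 - a2) = g a1 - g a2.
Proof.
move=> R1 R2; rewrite /L; case: pickP => [[a3 a4] /and3P[R3 R4 /eqP /= eq_diff]|].
  exact: g_subr_congr.
by move/(_ (a1, a2)); rewrite /= R1 R2 eqxx.
Qed.

Lemma LD u v : L (u + v) = L u + L v.
Proof.
have row_b0_big3 : (2 * #|F| < 3 * #|R|)%N by move: big_b0; lia.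
have [x Rx /andP[Rxu Rxv]] := big_set_translates_meet u v row_b0_big3.
have uE : u = (x + u) - x by ring.
have vE : v = x - (x - v) by ring.
have -> : u + v = (x + u) - (x - v) by ring.
by rewrite [in L u]uE [in L v]vE !L_subr // addrA subrK.
Qed.

Lemma L0 : L 0 = 0.
Proof. by apply: (addrI (L 0)); rewrite -LD !addr0. Qed.

Lemma LB u v : L (u - v) = L u - L v.
Proof. by apply: (addIr (L v)); rewrite -LD !subrK. Qed.

Lemma g_affine : exists g0, {in R, forall a, g a = L a + g0}.
Proof.
have /card_gt0P[a0 Ra0] : (0 < #|R|)%N by move: big_b0; lia.
by exists (g a0 - L a0) => a Ra; rewrite addrA addrAC -LB L_subr // subrK.
Qed.

Section Offset.
Variable g0 : F.
Hypothesis gE : {in R, forall a, g a = L a + g0}.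

Section Polar.
Variables b a'0 : F.
Hypotheses (b_neq0 : b != b0) (Sa'0 : a'0 \in row S b).

Local Notation l := (lam b).
Local Notation h a' := (c a' b).

Lemma trace1_swap_L u a' : a' \in row S b ->
  trace1 (l * u * (h a' - h a'0)) = trace1 (l * (a' - a'0) * L u).
Proof.
move=> Sa'; have [a1 R1 [a2 R2 ->]] := big_set_subr_onto row_b0_big u.
by rewrite (trace1_swap b_neq0) // L_subr.
Qed.

Definition polar x y := trace1 (l * x * L y) (+) trace1 (l * y * L x).

(* Substituting [g = L + g0] and [trace1_swap_L] into [trace1_cross] turns the
   intersection condition between rows [b0] and [b] into [qform a = qconst a']. *)
Definition qform a := trace1 (l * a * L a) (+) trace1 (l * a * g0)
  (+) trace1 (l * a'0 * L a) (+) trace1 (l * a * h a'0).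

Definition qconst a' := trace1 (l * a' * g0) (+) trace1 (l * a' * h a').

Lemma qform_row a a' : a \in R -> a' \in row S b -> qform a = qconst a'.
Proof.
move=> Ra Sa'; have := trace1_cross b_neq0 Ra Sa'; rewrite gE //.
have -> : l * ((a - a') * (L a + g0 - h a')) =
   l * a * L a + l * a * g0 - l * a * (h a' - h a'0) - l * a * h a'0
   - l * a' * L a - l * a' * g0 + l * a' * h a' by ring.
rewrite !(trace1D F2) !(trace1N F2) (trace1_swap_L a Sa').
have -> : l * (a' - a'0) * L a = l * a' * L a - l * a'0 * L a by ring.
rewrite (trace1B F2) /qform /qconst.
by do ! case: (trace1 _).
Qed.

Lemma qformD x y : qform (x + y) = qform x (+) qform y (+) polar x y.
Proof.
rewrite /qform /polar !LD.
have -> : l * (x + y) * (L x + L y)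
    = l * x * L x + l * y * L y + (l * x * L y + l * y * L x) by ring.
rewrite [l * (x + y)]mulrDr [(l * x + l * y) * _]mulrDl [l * a'0 * _]mulrDr.
rewrite [(l * x + l * y) * _]mulrDl !(trace1D F2).
by do ! case: (trace1 _).
Qed.

Lemma polar_additive x : bool_additive (polar x).
Proof.
move=> y z; rewrite /polar LD [l * x * _]mulrDr [l * (y + z)]mulrDr mulrDl.
by rewrite !(trace1D F2); do ! case: (trace1 _).
Qed.

(* [qform] is constant on row [b0] by [qform_row]: apply [qformD] to some [y] with
   [y] and [x + y] in row [b0] and [polar x y = false]. *)
Lemma qform_eq0 x : qform x = false.
Proof.
have [y /negbTE polar0 /andP[Ry Rxy]] := bool_additive_ker_meet (polar_additive x) x big_b0.
have := qformD x y; rewrite polar0 addbF (qform_row Rxy Sa'0) (qform_row Ry Sa'0).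
by case: (qform x); case: (qconst a'0).
Qed.

Lemma polar_eq0 x y : trace1 (l * x * L y) = trace1 (l * y * L x).
Proof. by have := qformD x y; rewrite !qform_eq0 /polar; case: (trace1 _); case: (trace1 _). Qed.

End Polar.

Lemma trace1_L_sym b : b \in big_rows S -> b != b0 ->
  forall x y, trace1 (lam b * x * L y) = trace1 (lam b * y * L x).
Proof.
rewrite inE => big_b bb0; have /card_gt0P[a' Sa'] : (0 < #|row S b|)%N by lia.
exact: polar_eq0 bb0 Sa'.
Qed.

Definition L_scalars := [set m | [forall y, L (m * y) == m * L y]].

Lemma L_scalarsD m n : m \in L_scalars -> n \in L_scalars -> m + n \in L_scalars.
Proof.
rewrite !inE => /forallP Lm /forallP Ln; apply/forallP => y.
by rewrite mulrDl LD (eqP (Lm y)) (eqP (Ln y)) mulrDl.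
Qed.

Lemma lam_ratio_L_scalar b : b \in big_rows S -> b != b0 -> lam b / lam b1 \in L_scalars.
Proof.
move=> big_b bb0; rewrite inE; apply/forallP => y; rewrite -subr_eq0.
have lam1 := lam_neq0 b1_neq0; set m := lam b / lam b1.
apply/eqP/(trace1_nondeg F2) => w.
have -> : w = lam b1 * (w / lam b1) by rewrite mulrC divfK.
rewrite mulrBr (trace1B F2) (trace1_L_sym big_b1 b1_neq0).
have -> : lam b1 * (m * y) = lam b * y by rewrite /m; field.
have -> : lam b1 * (w / lam b1) * (m * L y) = lam b * (w / lam b1) * L y.
  by rewrite /m; field.
by rewrite (trace1_L_sym big_b bb0) addbb.
Qed.

(* [L_scalars] contains [0] and the distinct nonzero ratios [lam b / lam b1], [b != b0] big. *)
Lemma L_scalars_full m : m \in L_scalars.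
Proof.
apply: big_addr_closed_full L_scalarsD _ m.
pose ratio b := lam b / lam b1.
have ratio_inj : injective ratio.
  by move=> b b' /(mulIf (invr_neq0 (lam_neq0 b1_neq0))) /lam_inj.
have ratios_sub : 0 |: [set ratio b | b in big_rows S :\ b0] \subset L_scalars.
  apply/subsetP => z /setU1P[-> | /imsetP[b /setD1P[bb0 big_b] ->]].
    by rewrite inE; apply/forallP => y; rewrite !mul0r L0.
  exact: lam_ratio_L_scalar.
have ratio_neq0 : 0 \notin [set ratio b | b in big_rows S :\ b0].
  apply/imsetP => -[b /setD1P[bb0 _]] /esym/eqP; apply/negP.
  exact: mulf_neq0 (lam_neq0 bb0) (invr_neq0 (lam_neq0 b1_neq0)).
have := subset_leq_card ratios_sub.
rewrite cardsU1 ratio_neq0 card_imset // => le_card.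
apply: leq_trans many_big_rows _; rewrite leq_mul2l /=; apply: leq_trans le_card.
by rewrite (cardsD1 b0); case: (b0 \in _).
Qed.

Lemma L_linear y : L y = y * L 1.
Proof. by have /[!inE] /forallP/(_ 1)/eqP := L_scalars_full y; rewrite mulr1. Qed.

Lemma affine_rows_of_offset :
  exists v y0, forall a b, (a, b) \in S -> c a b = v ^+ 2 * a + v * b + y0.
Proof.
have [v vE] := sqrr_onto_pchar2 F2 (L 1).
exists v, (g0 - v * b0).
have gR a : a \in R -> g a = v ^+ 2 * a + v * b0 + (g0 - v * b0).
  by move=> Ra; rewrite gE // L_linear vE; ring.
move=> a b Sab; have [bb0 | bb0] := eqVneq b b0; first by rewrite bb0 gR // inE -bb0.
apply/eqP; rewrite -subr_eq0; set e := c a b - _.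
have d_neq0 : (b - b0) ^+ 2 != 0 by rewrite expf_eq0 subr_eq0.
suff /eqP : e / (b - b0) ^+ 2 = 0 by rewrite mulf_eq0 invr_eq0 (negbTE d_neq0) orbF.
apply: (trace1_nondeg F2) => w; move: w.
apply: (bool_additive_vanish (trace1_scale_additive F2 _) (A := [set a - a' | a' in R])).
  by rewrite card_subr_imset; exact: row_b0_big.
move=> _ /imsetP[a' Ra' ->].
have Sa' : (a', b0) \in S by rewrite inE in Ra'.
have := meetS Sab Sa' bb0; rewrite (gR _ Ra').
have -> : (a - a') * (c a b - (v ^+ 2 * a' + v * b0 + (g0 - v * b0))) / (b - b0) ^+ 2
   = (a - a') * (e / (b - b0) ^+ 2) + artin_schreier (v * (a - a') / (b - b0)).
  by rewrite /e /artin_schreier; field; rewrite subr_eq0.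
by rewrite (trace1D F2) trace1_artin_schreier addbF.
Qed.

End Offset.

Lemma affine_rows :
  exists v y0, forall a b, (a, b) \in S -> c a b = v ^+ 2 * a + v * b + y0.
Proof. by have [g0 gE] := g_affine; exact: affine_rows_of_offset gE. Qed.

End AffineRows.

Lemma affine_of_big_set (F : finFieldType) (F2 : 2 \in [pchar F])
    (S : {set F * F}) (c : F -> F -> F) :
  (forall a b a' b', (a, b) \in S -> (a', b') \in S -> b != b' ->
     ~~ trace1 ((a - a') * (c a b - c a' b') / (b - b') ^+ 2)) ->
  (3 * (#|F| * #|F|) < 4 * #|S|)%N ->
  exists v y0, forall a b, (a, b) \in S -> c a b = v ^+ 2 * a + v * b + y0.
Proof.
move=> meetS bigS; have [b0 big_b0] := exists_big_row bigS.
have many_big_rows := card_big_rows bigS.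
have [b1 /setD1P[b1_neq0 big_b1]] : exists b1, b1 \in big_rows S :\ b0.
  apply/card_gt0P; move: many_big_rows (finNzRing_gt1 F).
  by rewrite (cardsD1 b0); set q := #|F|; case: (b0 \in _); lia.
exact (affine_rows F2 meetS big_b0 many_big_rows big_b1 b1_neq0).
Qed.

Lemma horner_size3 (R : nzRingType) (f : {poly R}) x : (size f <= 3)%N ->
  f.[x] = f`_0 + f`_1 * x + f`_2 * x ^+ 2.
Proof.
move=> size_f; rewrite (horner_coef_wide x size_f) !big_ord_recl big_ord0.
by rewrite /= expr0 mulr1 expr1 addr0 addrA.
Qed.

Section QuadraticFamily.
Variable F : finFieldType.
Hypothesis F2 : 2 \in [pchar F].
Variable U : seq {poly F}.
Hypotheses (uniqU : uniq U) (sizeU : forall f, f \in U -> (size f <= 3)%N)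
  (meetU : intersecting U).

Definition top_coefs (f : {poly F}) := (f`_2, f`_1).

Lemma top_coefs_inj : {in U &, injective top_coefs}.
Proof.
move=> f g Uf Ug [eq2 eq1]; have [x] := meetU Uf Ug.
rewrite !horner_size3 ?sizeU // eq2 eq1 => /addIr /addIr eq0.
apply/polyP => -[|[|[|i]]] //.
have coef3 h : h \in U -> h`_i.+3 = 0.
  by move=> /sizeU size_h; rewrite nth_default // (leq_trans size_h).
by rewrite !coef3.
Qed.

Definition top_coefs_set := [set p | p \in map top_coefs U].

Lemma mem_top_coefs_set f : f \in U -> top_coefs f \in top_coefs_set.
Proof. by move=> Uf; rewrite inE map_f. Qed.

Lemma card_top_coefs_set : #|top_coefs_set| = size U.
Proof.
rewrite cardsE (card_uniqP _) ?size_map // map_inj_in_uniq //.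
exact: top_coefs_inj.
Qed.

Definition coef0_of a b := (nth 0 U (find (fun f => top_coefs f == (a, b)) U))`_0.

Lemma coef0_ofE f : f \in U -> coef0_of f`_2 f`_1 = f`_0.
Proof.
move=> Uf; have has_f : has (fun g => top_coefs g == (f`_2, f`_1)) U.
  by apply/hasP; exists f.
rewrite /coef0_of; set g := nth 0 U _.
have Ug : g \in U by rewrite mem_nth -?has_find.
by rewrite (top_coefs_inj Ug Uf) //; apply/eqP; exact: (nth_find 0 has_f).
Qed.

Lemma top_coefs_set_trace1 a b a' b' :
  (a, b) \in top_coefs_set -> (a', b') \in top_coefs_set -> b != b' ->
  ~~ trace1 ((a - a') * (coef0_of a b - coef0_of a' b') / (b - b') ^+ 2).
Proof.
rewrite !inE => /mapP[f Uf [-> ->]] /mapP[g Ug [-> ->]] bb'.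
rewrite !coef0_ofE //; have [x] := meetU Uf Ug.
by rewrite !horner_size3 ?sizeU //; apply: trace1_meet.
Qed.

End QuadraticFamily.

Lemma sqrtC_nat_le (q : nat) : sqrtC q%:R <= q%:R :> algC.
Proof.
rewrite -[leRHS]sqrCK ?ler0n // ler_sqrtC ?qualifE /= ?ler0n ?exprn_ge0 //.
by rewrite -natrX ler_nat; case: q => // n; rewrite leq_pmulr.
Qed.

(* Since [sqrtC q <= q], the bound on [q ^ 2 - N] is below [q ^ 2 / 4]; nothing sharper is used. *)
Lemma excess_lt_quarter (q N : nat) :
  ((q ^ 2)%:Z - N%:Z)%:~R
    < (q%:R * sqrtC q%:R / 4 - q%:R / 8 - sqrtC q%:R / 8 : algC) ->
  (3 * q ^ 2 < 4 * N)%N.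
Proof.
set s := sqrtC q%:R; have s_ge0 : 0 <= s by rewrite sqrtC_ge0 ler0n.
have bound_le : q%:R * s / 4 - q%:R / 8 - s / 8 <= q%:R * q%:R / (4 : algC).
  apply: le_trans (_ : q%:R * s / 4 <= _).
    by rewrite -addrA -opprD lerBlDr lerDl addr_ge0 // divr_ge0 // ?ler0n.
  by rewrite ler_wpM2r ?invr_ge0 ?ler0n // ler_wpM2l ?ler0n ?sqrtC_nat_le.
move=> /lt_le_trans/(_ bound_le); rewrite ltr_pdivlMr ?ltr0n // => lt_alg.
have : (((q ^ 2)%:Z - N%:Z) * 4)%:~R < ((q * q)%N%:Z)%:~R :> algC.
  by rewrite intrM -pmulrn natrM.
by rewrite ltr_int; lia.
Qed.

Theorem theorem5 (F : finFieldType) (q : nat) (U : seq {poly F}) :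
  (exists k : nat, q = (2 ^ k)%N) -> (2 < q)%N -> #|F| = q ->
  uniq U -> (forall f, f \in U -> (size f <= 3)%N) ->
  intersecting U ->
  ((q ^ 2)%:Z - (size U)%:Z)%:~R
    < (q%:R * sqrtC q%:R / 4 - q%:R / 8 - sqrtC q%:R / 8 : algC) ->
  common_point U.
Proof.
move=> [k qE] _ cardF uniqU sizeU meetU /excess_lt_quarter bigU.
have F2 : 2 \in [pchar F] by apply: (@card_finPcharP _ _ k); rewrite ?cardF.
have big_set : (3 * (#|F| * #|F|) < 4 * #|top_coefs_set U|)%N.
  by rewrite card_top_coefs_set // cardF mulnn.
have [v [y0 coef0E]] := affine_of_big_set F2 (top_coefs_set_trace1 F2 sizeU meetU) big_set.
exists v, y0 => f Uf.
have := coef0E _ _ (mem_top_coefs_set Uf); rewrite coef0_ofE // => f0E.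
by rewrite horner_size3 ?sizeU // f0E; ring: (pcharf0 F2).
Qed.
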